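(* Let $G$ be a connected diamond-free CIS graph and let $n\ge 3$. Suppose $G$ has an induced subgraph $H$ with $V(H)=\{h_{i,j}: 1\le i,j\le n\}$ where, for $(i,j)\ne(k,l)$, $h_{i,j}h_{k,l}\in E(H)$ iff $i=k$ or $j=l$ (so $H\cong L(K_{n,n})$). Let $R_i=\{h_{i,j}:1\le j\le n\}$ and $L_j=\{h_{i,j}:1\le i\le n\}$. Then either all $2n$ cliques $R_1,\dots,R_n,L_1,\dots,L_n$ are maximal cliques of $G$, or none of them is a maximal clique of $G$. Moreover, if all of them are maximal cliques of $G$, then $G=H$.
   Context: A clique is strong if it intersects every inclusion-maximal stable set; a graph is CIS if every inclusion-maximal clique is strong. The diamond is $K_4$ minus one edge; diamond-free means no induced diamond. Maximal clique means inclusion-maximal. *)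

From mathcomp Require Import all_boot.
Set Implicit Arguments. Unset Strict Implicit. Unset Printing Implicit Defensive.

(* A finite simple graph: vertex type T : finType, adjacency e : rel T,
   assumed symmetric and irreflexive (hypotheses in the theorem). *)

Definition is_clique (T : finType) (e : rel T) (A : {set T}) : Prop :=
  forall x y, x \in A -> y \in A -> x != y -> e x y.

Definition is_stable (T : finType) (e : rel T) (A : {set T}) : Prop :=
  forall x y, x \in A -> y \in A -> ~~ e x y.

Definition maximal_clique (T : finType) (e : rel T) (A : {set T}) : Prop :=
  is_clique e A /\ forall B : {set T}, is_clique e B -> A \subset B -> B = A.

Definition maximal_stable (T : finType) (e : rel T) (A : {set T}) : Prop :=
  is_stable e A /\ forall B : {set T}, is_stable e B -> A \subset B -> B = A.

Definition strong_clique (T : finType) (e : rel T) (C : {set T}) : Prop :=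
  forall S : {set T}, maximal_stable e S -> exists x, x \in C :&: S.

Definition CIS (T : finType) (e : rel T) : Prop :=
  forall C : {set T}, maximal_clique e C -> strong_clique e C.

Definition diamond_free (T : finType) (e : rel T) : Prop :=
  ~ exists a b c d : T,
      [&& uniq [:: a; b; c; d], ~~ e a b,
          e a c, e a d, e b c, e b d & e c d].

Definition connected_graph (T : finType) (e : rel T) : Prop :=
  forall x y : T, connect e x y.

Definition row_set (T : finType) (n : nat) (h : 'I_n * 'I_n -> T) (i : 'I_n)
  : {set T} := [set h (i, j) | j : 'I_n].

Definition col_set (T : finType) (n : nat) (h : 'I_n * 'I_n -> T) (j : 'I_n)
  : {set T} := [set h (i, j) | i : 'I_n].

From mathcomp Require Import all_boot.
From mathcomp Require Import fingroup perm.
From Stdlib Require Import Classical.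
Set Implicit Arguments. Unset Strict Implicit. Unset Printing Implicit Defensive.

(* The proof rests on one obstruction.  Call a "transversal" of the grid a
   choice of one cell h(k, t k) in every row k != r, t a permutation of 'I_n.
   If a vertex x0 is adjacent to the cell h(r, t r) but to no cell of the
   transversal, then x0 together with the transversal is a stable set that
   dominates both the row R_r and the column L_(t r); since in a CIS graph a
   maximal clique meets every maximal stable set, neither line is then a
   maximal clique.
   - If a row R_i is not maximal, some v extends it; by diamond-freeness v sees
     no grid vertex outside R_i, so every column L_j is caught by the
     obstruction (with t the transposition of i and j).  Transposing the grid
     gives the symmetric statement, whence the dichotomy.
   - If all lines are maximal and G has a vertex off the grid, connectivity
     gives such a vertex w with a neighbour h(p, q).  By diamond-freeness w has
     at most one neighbour in each line, so its neighbours form a partial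
     matching, and a permutation t with t p = q avoiding this matching exists
     (as n >= 3); the obstruction then contradicts maximality of R_p. *)

Definition stableb (T : finType) (e : rel T) (A : {set T}) : bool :=
  [forall x in A, forall y in A, ~~ e x y].

Lemma stableP (T : finType) (e : rel T) (A : {set T}) :
  reflect (is_stable e A) (stableb e A).
Proof.
apply: (iffP forall_inP) => [stA x y xA yA | stA x xA].
  by move/forall_inP: (stA x xA) => /(_ y yA).
by apply/forall_inP => y yA; apply: stA.
Qed.

Section CliquesInGraphs.

Variables (T : finType) (e : rel T).

Lemma clique_subset (A B : {set T}) :
  is_clique e B -> A \subset B -> is_clique e A.
Proof. by move=> cB sAB x y xA yA; apply: cB; apply: (subsetP sAB). Qed.

Lemma clique_add (C : {set T}) x :
  symmetric e -> is_clique e C -> (forall z, z \in C -> e x z) ->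
  is_clique e (x |: C).
Proof.
move=> sym cC xC y z; rewrite !in_setU1.
case/orP => [/eqP ->|yC]; case/orP => [/eqP ->|zC].
- by rewrite eqxx.
- by move=> _; apply: xC.
- by move=> _; rewrite sym; apply: xC.
- exact: cC.
Qed.

Lemma nonmaximal_clique_extends (C : {set T}) :
  is_clique e C -> ~ maximal_clique e C ->
  exists2 v, v \notin C & is_clique e (v |: C).
Proof.
move=> cC nmC; apply: NNPP => noext; apply: nmC; split => // B cB sCB.
apply/eqP; rewrite eqEsubset sCB andbT; apply/subsetP => v vB.
apply/negPn/negP => vC; apply: noext; exists v => //.
by apply: clique_subset cB _; rewrite subUset sub1set vB sCB.
Qed.

(* The CIS property, read contrapositively: no stable set dominates a maximal
   clique, because it extends to a maximal stable set which must meet it. *)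
Lemma CIS_no_dominating_stable (C S : {set T}) :
  CIS e -> maximal_clique e C -> is_stable e S ->
  (forall x, x \in C -> exists2 y, y \in S & e x y) -> False.
Proof.
move=> cis mC stS dom.
have [S' /maxsetP [/stableP stS' maxS'] sSS'] :=
  maxset_exists (introT (stableP e S) stS).
have mS' : maximal_stable e S'.
  by split => // B stB; apply: maxS'; apply/stableP.
have [x /setIP [xC xS']] := cis C mC S' mS'.
have [y yS exy] := dom x xC.
by move: (stS' x y xS' (subsetP sSS' y yS)); rewrite exy.
Qed.

Lemma diamond_free_clique_neighbour (C : {set T}) x a b z :
  diamond_free e -> is_clique e C -> x \notin C ->
  a \in C -> b \in C -> a != b -> e x a -> e x b -> z \in C -> e x z.
Proof.
move=> df cC xC aC bC ab xa xb zC.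
have [-> //|za] := eqVneq z a; have [-> //|zb] := eqVneq z b.
apply/negPn/negP => xz; apply: df; exists x, z, a, b.
have out y : y \in C -> x != y by move=> yC; apply: contraNneq xC => ->.
rewrite /= !inE !negb_or !out // za zb ab xz xa xb /=.
by rewrite (cC z a) // (cC z b) // (cC a b).
Qed.

Lemma maximal_clique_one_neighbour (C : {set T}) x a b :
  symmetric e -> diamond_free e -> maximal_clique e C -> x \notin C ->
  a \in C -> b \in C -> e x a -> e x b -> a = b.
Proof.
move=> sym df [cC maxC] xC aC bC xa xb; apply/eqP/negPn/negP => ab.
have xCl : is_clique e (x |: C).
  by apply: clique_add => // z; apply: diamond_free_clique_neighbour ab xa xb.
by move: xC; rewrite -(maxC _ xCl (subsetUr _ _)) setU11.
Qed.

Lemma extender_adj (C : {set T}) v z :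
  v \notin C -> is_clique e (v |: C) -> z \in C -> e v z.
Proof.
move=> vC cvC zC; apply: cvC; rewrite ?setU11 ?in_setU1 ?zC ?orbT //.
by apply: contraNneq vC => ->.
Qed.

Lemma connect_exit (A : {set T}) x y :
  connect e x y -> x \in A -> y \notin A ->
  exists u v, [/\ u \in A, v \notin A & e u v].
Proof.
case/connectP => p; elim: p x => [|z p IHp] x /=; first by move=> _ -> ->.
case/andP => exz pz ey xA yA.
have [zA|zA] := boolP (z \in A); first exact: IHp pz ey zA yA.
by exists x, z.
Qed.

End CliquesInGraphs.

Lemma ord_avoid2 n (a b : 'I_n) : 3 <= n -> exists c : 'I_n, (c != a) && (c != b).
Proof.
move=> n3; have : ~~ ([set: 'I_n] \subset [set a; b]).
  apply: contraTN n3 => /subset_leq_card; rewrite cardsT card_ord cards2 -ltnNge.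
  by move/leq_ltn_trans; apply; case: (a != b).
by case/subsetPn => c _; rewrite !inE negb_or; exists c.
Qed.

(* A permutation with fewest matched positions k != p has none: otherwise
   composing it with a transposition of such a k and an index k' outside
   {p, k} (here n >= 3 is used) strictly decreases their number. *)
Lemma perm_avoiding_matching n (F : rel 'I_n) (p q : 'I_n) : 3 <= n ->
  (forall k c c', F k c -> F k c' -> c = c') ->
  (forall k k' c, F k c -> F k' c -> k = k') ->
  exists t : {perm 'I_n}, t p = q /\ forall k, k != p -> ~~ F k (t k).
Proof.
move=> n3 Fr Fc.
pose bad (t : {perm 'I_n}) := [set k | (k != p) && F k (t k)].
have [t /eqP tp minbad] :=
  @arg_minnP _ (tperm p q) (fun t => t p == q) (fun t => #|bad t|)
    (introT eqP (tpermL p q)).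
exists t; split => // k kp; apply/negP => Fk.
have kb : k \in bad t by rewrite inE kp Fk.
have [k' /andP [k'p k'k]] := ord_avoid2 p k n3.
pose t' := (tperm k k' * t)%g.
have t'p : t' p == q by rewrite /t' permM tpermD ?tp.
have sub : bad t' \subset bad t :\ k.
  apply/subsetP => x; rewrite !inE /t' permM => /andP [xp Fx].
  have [xk|xk] := eqVneq x k.
    move: Fx; rewrite xk tpermL => /(Fr _ _ _ Fk) /perm_inj ek.
    by rewrite ek eqxx in k'k.
  have [xk'|xk'] := eqVneq x k'.
    move: Fx; rewrite xk' tpermR => /(Fc _ _ _ Fk) ek.
    by rewrite ek eqxx in k'k.
  by rewrite tpermD 1?eq_sym // in Fx; rewrite xp Fx.
have := leq_trans (minbad _ t'p) (subset_leq_card sub).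
by rewrite (cardsD1 k) kb ltnn.
Qed.

Section RookGrid.

Variables (T : finType) (e : rel T) (n : nat) (h : 'I_n * 'I_n -> T).
Hypotheses (sym : symmetric e) (irr : irreflexive e) (n3 : 3 <= n)
  (hinj : injective h)
  (hadj : forall p q : 'I_n * 'I_n, p != q ->
      e (h p) (h q) = (p.1 == q.1) || (p.2 == q.2)).

Definition grid : {set T} := [set h p | p : 'I_n * 'I_n].

Lemma grid_mem p : h p \in grid.
Proof. exact: imset_f. Qed.

Lemma grid_nadj k c k' c' : k != k' -> c != c' -> ~~ e (h (k, c)) (h (k', c')).
Proof.
move=> kk cc; rewrite hadj /= ?(negbTE kk) ?(negbTE cc) //.
by rewrite xpair_eqE (negbTE kk).
Qed.

Lemma grid_adj_row k c c' : c != c' -> e (h (k, c)) (h (k, c')).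
Proof. by move=> cc; rewrite hadj /= ?eqxx // xpair_eqE negb_and cc orbT. Qed.

Lemma grid_adj_col k k' c : k != k' -> e (h (k, c)) (h (k', c)).
Proof. by move=> kk; rewrite hadj /= ?eqxx ?orbT // xpair_eqE negb_and kk. Qed.

Lemma mem_row k c i : (h (k, c) \in row_set h i) = (k == i).
Proof. by apply/imsetP/eqP => [[c' _ /hinj [-> _]] //|->]; exists c. Qed.

Lemma mem_col k c j : (h (k, c) \in col_set h j) = (c == j).
Proof. by apply/imsetP/eqP => [[k' _ /hinj [_ ->]] //|->]; exists k. Qed.

Lemma row_mem k c : h (k, c) \in row_set h k.
Proof. by rewrite mem_row. Qed.

Lemma col_mem k c : h (k, c) \in col_set h c.
Proof. by rewrite mem_col. Qed.

Lemma row_clique i : is_clique e (row_set h i).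
Proof.
move=> x y /imsetP [c _ ->] /imsetP [c' _ ->] xy.
by apply: grid_adj_row; apply: contraNneq xy => ->.
Qed.

Lemma transversal_stable x0 (t : {perm 'I_n}) r :
  (forall k, k != r -> ~~ e x0 (h (k, t k))) ->
  is_stable e (x0 |: [set h (k, t k) | k in [set k | k != r]]).
Proof.
move=> nx0 x y; rewrite !in_setU1.
have x0S z : z \in [set h (k, t k) | k in [set k | k != r]] -> ~~ e x0 z.
  by case/imsetP => k; rewrite inE => kr ->; apply: nx0.
case/orP => [/eqP ->|xS]; case/orP => [/eqP ->|yS].
- by rewrite irr.
- exact: x0S.
- by rewrite sym; apply: x0S.
case/imsetP: xS => k _ ->; case/imsetP: yS => k' _ ->.
have [-> |kk] := eqVneq k k'; first by rewrite irr.
by apply: grid_nadj => //; rewrite (inj_eq perm_inj).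
Qed.

(* The obstruction: such a vertex, adjacent to the remaining cell h(r, t r),
   makes a stable set dominating both R_r and L_(t r). *)
Lemma transversal_obstruction x0 (t : {perm 'I_n}) r :
  CIS e -> e x0 (h (r, t r)) -> (forall k, k != r -> ~~ e x0 (h (k, t k))) ->
  ~ maximal_clique e (row_set h r) /\ ~ maximal_clique e (col_set h (t r)).
Proof.
move=> cis x0r nx0.
have stS := transversal_stable nx0.
have inS k : k != r -> h (k, t k) \in x0 |: [set h (k, t k) | k in [set k | k != r]].
  by move=> kr; rewrite in_setU1 imset_f ?orbT // inE.
split => mL; apply: (CIS_no_dominating_stable cis mL stS) => x /imsetP [a _ ->].
- have [->|aq] := eqVneq a (t r); first by exists x0; rewrite ?setU11 // sym.
  have kr : (t^-1)%g a != r by apply: contraNneq aq => <-; rewrite permKV.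
  exists (h ((t^-1)%g a, t ((t^-1)%g a))); first exact: inS.
  by rewrite permKV; apply: grid_adj_col; rewrite eq_sym.
- have [->|ar] := eqVneq a r; first by exists x0; rewrite ?setU11 // sym.
  exists (h (a, t a)); first exact: inS.
  by apply: grid_adj_row; rewrite (inj_eq perm_inj) eq_sym.
Qed.

(* A vertex v extending the row R_i sees no other grid vertex: a neighbour
   h(k, c) with k != i would span a diamond with v, h(i, c) and h(i, d). *)
Lemma row_extender_private i v k c :
  diamond_free e -> v \notin row_set h i -> is_clique e (v |: row_set h i) ->
  k != i -> ~~ e v (h (k, c)).
Proof.
move=> df vR cvR ki; apply/negP => vk.
have [d /andP [dc _]] := ord_avoid2 c c n3; rewrite eq_sym in dc.
apply: (negP (grid_nadj ki dc)).
apply: (diamond_free_clique_neighbour (a := v) (b := h (i, c)) df cvR).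
- rewrite in_setU1 mem_row (negbTE ki) orbF.
  by apply: contraTneq vk => ->; rewrite irr.
- exact: setU11.
- by rewrite in_setU1 row_mem orbT.
- by apply: contraNneq vR => ->; apply: row_mem.
- by rewrite sym.
- exact: grid_adj_col.
- by rewrite in_setU1 row_mem orbT.
Qed.

Lemma nonmaximal_row_nonmaximal_columns i :
  CIS e -> diamond_free e -> ~ maximal_clique e (row_set h i) ->
  forall j, ~ maximal_clique e (col_set h j).
Proof.
move=> cis df nmR j.
have [v vR cvR] := nonmaximal_clique_extends (@row_clique i) nmR.
pose t := tperm i j.
have vi : e v (h (i, t i)) by apply: extender_adj vR cvR (row_mem i (t i)).
have [_] := transversal_obstruction cis vi
  (fun k => @row_extender_private i v k (t k) df vR cvR).
by rewrite tpermL.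
Qed.

(* When all lines are maximal, a vertex off the grid has at most one neighbour
   per line, so a transversal avoiding its neighbours exists: it has none. *)
Lemma off_grid_vertex_isolated w p :
  CIS e -> diamond_free e ->
  (forall i, maximal_clique e (row_set h i)) ->
  (forall j, maximal_clique e (col_set h j)) ->
  w \notin grid -> ~~ e w (h p).
Proof.
move=> cis df mR mL wI; apply/negP => wp.
have wR k : w \notin row_set h k.
  by apply: contraNN wI => /imsetP [c _ ->]; apply: grid_mem.
have wL c : w \notin col_set h c.
  by apply: contraNN wI => /imsetP [k _ ->]; apply: grid_mem.
have Fr k c c' : e w (h (k, c)) -> e w (h (k, c')) -> c = c'.
  move=> wc wc'.
  by case/hinj: (maximal_clique_one_neighbour sym df (mR k) (wR k) (row_mem k c)
    (row_mem k c') wc wc').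
have Fc k k' c : e w (h (k, c)) -> e w (h (k', c)) -> k = k'.
  move=> wk wk'.
  by case/hinj: (maximal_clique_one_neighbour sym df (mL c) (wL c) (col_mem k c)
    (col_mem k' c) wk wk').
have [t [tp tno]] :=
  perm_avoiding_matching (F := fun k c => e w (h (k, c))) p.1 p.2 n3 Fr Fc.
have wt : e w (h (p.1, t p.1)) by rewrite tp -surjective_pairing.
have [nmR _] := transversal_obstruction cis wt tno.
exact: nmR (mR p.1).
Qed.

Lemma all_lines_maximal_grid_full :
  CIS e -> diamond_free e -> connected_graph e ->
  (forall i, maximal_clique e (row_set h i)) ->
  (forall j, maximal_clique e (col_set h j)) ->
  forall v, v \in grid.
Proof.
move=> cis df cg mR mL v; apply/negPn/negP => vI.
have o : 'I_n := Ordinal (leq_trans (isT : 0 < 3) n3).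
have [u [w [uI wI uw]]] := connect_exit (cg (h (o, o)) v) (grid_mem _) vI.
case/imsetP: uI => p _ up.
by move: (off_grid_vertex_isolated p cis df mR mL wI); rewrite -up sym uw.
Qed.

End RookGrid.

(* Transposing the grid exchanges rows and columns, so the first half of the
   dichotomy also holds with their roles swapped; together they give it. *)
Lemma lines_dichotomy (T : finType) (e : rel T) (n : nat) (h : 'I_n * 'I_n -> T) :
  symmetric e -> irreflexive e -> diamond_free e -> CIS e -> 3 <= n ->
  injective h ->
  (forall p q : 'I_n * 'I_n, p != q ->
      e (h p) (h q) = (p.1 == q.1) || (p.2 == q.2)) ->
  (forall i, maximal_clique e (row_set h i)) /\
  (forall j, maximal_clique e (col_set h j))
  \/
  (forall i, ~ maximal_clique e (row_set h i)) /\
  (forall j, ~ maximal_clique e (col_set h j)).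
Proof.
move=> sym irr df cis n3 hinj hadj.
pose h' (p : 'I_n * 'I_n) := h (p.2, p.1).
have h'inj : injective h' by move=> [a b] [c d] /hinj [-> ->].
have h'adj p q : p != q -> e (h' p) (h' q) = (p.1 == q.1) || (p.2 == q.2).
  move=> pq; rewrite hadj 1?orbC //.
  by apply: contra pq; case: p q => [a b] [c d]; rewrite !xpair_eqE andbC.
have rows_cols := nonmaximal_row_nonmaximal_columns sym irr n3 hinj hadj cis df.
have cols_rows := nonmaximal_row_nonmaximal_columns sym irr n3 h'inj h'adj cis df.
have o : 'I_n := Ordinal (leq_trans (isT : 0 < 3) n3).
have [allmax|] := classic ((forall i, maximal_clique e (row_set h i)) /\
                           (forall j, maximal_clique e (col_set h j))).
  by left.
case/not_and_or => /not_all_ex_not [l nml]; right.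
- by split; [|exact: rows_cols nml]; apply: cols_rows (rows_cols _ nml o).
- by split; [exact: cols_rows nml|]; apply: rows_cols (cols_rows _ nml o).
Qed.

Theorem lemma6 (T : finType) (e : rel T) (n : nat) (h : 'I_n * 'I_n -> T) :
  symmetric e -> irreflexive e ->
  connected_graph e -> diamond_free e -> CIS e ->
  3 <= n ->
  injective h ->
  (forall p q : 'I_n * 'I_n, p != q ->
      e (h p) (h q) = (p.1 == q.1) || (p.2 == q.2)) ->
  ((forall i, maximal_clique e (row_set h i)) /\
   (forall j, maximal_clique e (col_set h j))
   \/
   (forall i, ~ maximal_clique e (row_set h i)) /\
   (forall j, ~ maximal_clique e (col_set h j))) /\
  ((forall i, maximal_clique e (row_set h i)) ->
   (forall j, maximal_clique e (col_set h j)) ->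
   forall v : T, v \in [set h p | p : 'I_n * 'I_n]).
Proof.
move=> sym irr cg df cis n3 hinj hadj; split.
  exact: lines_dichotomy.
exact: all_lines_maximal_grid_full.
Qed.
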